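(* Under the standing setup, there exists a polynomial $p_3(x)$ such that for all sufficiently large $n$, $$\mu\otimes\mu(Q_{n,k})\le p_3(n)\,e^{-2n(h(\mu)-\delta)}\gamma^n.$$
   Context: Standing setup. $\mathcal{A}$ is a finite alphabet, $X\subset\mathcal{A}^{\mathbb{Z}}$ a non-trivial topologically mixing SFT with left shift $\sigma$, $f:X\to\mathbb{R}$ H\''older continuous with pressure $P=P_X(f)$, and $\mu$ the Gibbs measure (unique equilibrium state) of $f$, with entropy $h(\mu)$. $B_m(X)$ is the set of words of length $m$ in $X$; $[w]=\{x\in X:x_0\dots x_{|w|-1}=w\}$, $\mu(w)=\mu([w])$, and $\mu\otimes\mu(S)=\sum_{(u,v)\in S}\mu(u)\mu(v)$. Words are written $u=u_1\dots u_k$, $u_i^j=u_i\dots u_j$. $K>1$ is a constant such that: (i) for all $m\ge1$, $x\in X$: $K^{-1}\le\mu(x_0\dots x_{m-1})/\exp(-Pm+\sum_{i=0}^{m-1}f(\sigma^ix))\le K$; (ii) $\mu(uv)\le K\mu(u)\mu(v)$ and $\mu(\sigma^{-|u|}[v]\mid[u])\le K\mu(v)$ whenever $uv\in B(X)$. $\gamma_0=\inf\{\gamma>0:\exists n_0\ \forall m\ge n_0\ \forall u\in B_m(X),\ \mu(u)\le\gamma^m\}$. Parameters: $\alpha\in(\gamma_0,1]$; $\gamma\in(\gamma_0,\alpha)$; $n_0$ such that $\mu(u)\le\gamma^{|u|}$ for all $u\in B(X)$ with $|u|\ge n_0$; $n\ge n_0$; $0<\delta<\frac14\log(\alpha/\gamma)$;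 $k=k(n)$ with $n/k\to0$ and $k=o(n^2/\log n)$; $\ell=k-n+1$. For a word $u$ of length $\ge n$, $W_n(u)$ is the set of distinct subwords of $u$ of length $n$. $E_n=\{u\in B_n(X):|-\frac1n\log\mu(u)-h(\mu)|<\delta\}$, $G_{n,k}=\{u\in B_k(X): u_1^n=u_\ell^k\text{ and }u_1^n\in E_n\}$, and $Q_{n,k}=\{(u,v)\in G_{n,k}\times G_{n,k}: W_n(u)\cap W_n(v)\neq\emptyset\}$. *)

From Stdlib Require Import Reals Lra Lia ZArith Arith List.
From Stdlib Require Import ClassicalEpsilon.
Import ListNotations.
Open Scope R_scope.

Definition sumR {B : Type} (l : list B) (F : B -> R) : R :=
  fold_right (fun x acc => F x + acc) 0 l.

Definition ind (P : Prop) : R :=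
  if excluded_middle_informative P then 1 else 0.

(* real polynomial given by its coefficient list [c0; c1; ...] *)
Definition peval (p : list R) (x : R) : R :=
  fold_right (fun c acc => c + x * acc) 0 p.

Definition IsInf (S : R -> Prop) (g : R) : Prop :=
  (forall s, S s -> g <= s) /\ (forall b, (forall s, S s -> b <= s) -> b <= g).

Definition FiniteAlphabet {A : Type} (enumA : list A) : Prop :=
  NoDup enumA /\ forall a, In a enumA.

Fixpoint words {A : Type} (enumA : list A) (m : nat) : list (list A) :=
  match m with
  | O => [nil]
  | S m' => flat_map (fun w => map (fun a => a :: w) enumA) (words enumA m')
  end.

Definition block {A : Type} (x : Z -> A) (i : Z) (m : nat) : list A :=
  map (fun j => x (i + Z.of_nat j)%Z) (seq 0 m).

(* u_{i+1} ... u_{i+n}  (0-based start i, length n) *)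
Definition subw {A : Type} (u : list A) (i n : nat) : list A :=
  firstn n (skipn i u).

Definition SFT {A : Type} (F : list (list A)) (x : Z -> A) : Prop :=
  forall (i : Z) (w : list A), In w F -> block x i (length w) <> w.

Definition inLang {A : Type} (X : (Z -> A) -> Prop) (w : list A) : Prop :=
  exists x, X x /\ block x 0 (length w) = w.

Definition nontrivial {A : Type} (X : (Z -> A) -> Prop) : Prop :=
  exists x y, X x /\ X y /\ x <> y.

Definition top_mixing {A : Type} (X : (Z -> A) -> Prop) : Prop :=
  forall u v, inLang X u -> inLang X v ->
    exists N, forall m, (N <= m)%nat ->
      exists w, length w = m /\ inLang X (u ++ w ++ v).

Definition shiftn {A : Type} (x : Z -> A) (i : nat) : Z -> A :=
  fun j => x (j + Z.of_nat i)%Z.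

(* Hoelder continuity w.r.t. the metric d(x,y) = theta0^{N(x,y)},
   N(x,y) = max{N : x_i = y_i for |i| < N}; any Hoelder exponent is
   absorbed into theta. *)
Definition Holder {A : Type} (X : (Z -> A) -> Prop) (f : (Z -> A) -> R) : Prop :=
  exists C theta, 0 < theta < 1 /\
    forall x y (N : nat), X x -> X y ->
      (forall i, (Z.abs i < Z.of_nat N)%Z -> x i = y i) ->
      Rabs (f x - f y) <= C * theta ^ N.

Definition Sm {A : Type} (f : (Z -> A) -> R) (x : Z -> A) (m : nat) : R :=
  sumR (seq 0 m) (fun i => f (shiftn x i)).

Definition IsPressure {A : Type} (enumA : list A) (X : (Z -> A) -> Prop)
  (f : (Z -> A) -> R) (P : R) : Prop :=
  exists s : list A -> R,
    (forall w, inLang X w ->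
       is_lub (fun t => exists x, X x /\ block x 0 (length w) = w /\
                                  t = Sm f x (length w)) (s w)) /\
    Un_cv (fun m => ln (sumR (words enumA m)
                          (fun w => ind (inLang X w) * exp (s w))) / INR m) P.

(* A shift-invariant Borel probability measure on X, given through its values
   mu w = mu([w]) on cylinders [w] = {x : x_0 ... x_{|w|-1} = w}
   (Kolmogorov consistency + shift invariance + support in X). *)
Definition InvProbOn {A : Type} (enumA : list A) (X : (Z -> A) -> Prop)
  (mu : list A -> R) : Prop :=
  mu nil = 1 /\
  (forall w, 0 <= mu w) /\
  (forall w, mu w = sumR enumA (fun a => mu (w ++ [a]))) /\
  (forall w, mu w = sumR enumA (fun a => mu (a :: w))) /\
  (forall w, ~ inLang X w -> mu w = 0).

(* Kolmogorov--Sinai entropy (the time-zero partition is a generator) *)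
Definition IsEntropy {A : Type} (enumA : list A) (mu : list A -> R) (h : R) : Prop :=
  Un_cv (fun m => - sumR (words enumA m) (fun w => mu w * ln (mu w)) / INR m) h.

Definition GibbsProp {A : Type} (X : (Z -> A) -> Prop) (f : (Z -> A) -> R)
  (P : R) (mu : list A -> R) (K : R) : Prop :=
  forall (m : nat) (x : Z -> A), (1 <= m)%nat -> X x ->
    / K <= mu (block x 0 m) / exp (- P * INR m + Sm f x m) <= K.

Definition QuasiBernoulli {A : Type} (X : (Z -> A) -> Prop)
  (mu : list A -> R) (K : R) : Prop :=
  forall u v, inLang X (u ++ v) ->
    mu (u ++ v) <= K * mu u * mu v /\
    mu (u ++ v) / mu u <= K * mu v.  (* mu(sigma^{-|u|}[v] | [u]) *)

Definition gamma0_def {A : Type} (X : (Z -> A) -> Prop) (mu : list A -> R) (g : R) : Prop :=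
  IsInf (fun g' => 0 < g' /\ exists n0 : nat, forall (m : nat) (u : list A),
            (n0 <= m)%nat -> length u = m -> inLang X u -> mu u <= g' ^ m) g.

Definition En {A : Type} (X : (Z -> A) -> Prop) (mu : list A -> R) (h delta : R)
  (n : nat) (u : list A) : Prop :=
  inLang X u /\ length u = n /\ Rabs (- (1 / INR n) * ln (mu u) - h) < delta.

Definition Gnk {A : Type} (X : (Z -> A) -> Prop) (mu : list A -> R) (h delta : R)
  (n k : nat) (u : list A) : Prop :=
  let l := (k - n + 1)%nat in
  inLang X u /\ length u = k /\
  firstn n u = subw u (l - 1) n /\     (* u_1^n = u_l^k *)
  En X mu h delta n (firstn n u).

Definition share_subword {A : Type} (n : nat) (u v : list A) : Prop :=
  exists i j, (i + n <= length u)%nat /\ (j + n <= length v)%nat /\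
              subw u i n = subw v j n.

Definition Qnk {A : Type} (X : (Z -> A) -> Prop) (mu : list A -> R) (h delta : R)
  (n k : nat) (u v : list A) : Prop :=
  Gnk X mu h delta n k u /\ Gnk X mu h delta n k v /\ share_subword n u v.

Definition mu2 {A : Type} (enumA : list A) (mu : list A -> R) (k : nat)
  (S : list A -> list A -> Prop) : R :=
  sumR (words enumA k) (fun u => sumR (words enumA k) (fun v =>
    ind (S u v) * mu u * mu v)).

(* A word of G_{n,k} begins and ends with the same block of E_n, of measure at most
   e^{-n(h-delta)}.  Splitting off one of the two copies with the quasi-Bernoulli
   inequality costs a factor K e^{-n(h-delta)}, so mu(G_{n,k}) <= K e^{-n(h-delta)}; when
   k >= 3n, any prescribed n-block of the word survives in the remaining part, so the
   G-words with a given n-block s at a given place have measure at most K e^{-n(h-delta)} mu(s),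
   and mu(s) <= gamma^n.  A pair in Q_{n,k} shares an n-block at some pair of positions,
   and a union bound over the at most k^2 <= n^4 pairs of positions gives the estimate;
   both k >= 3n and k <= n^2 hold eventually by the growth assumptions on k. *)

From Stdlib Require Import Reals ZArith List Lra Lia ClassicalEpsilon.
Import ListNotations.
Open Scope R_scope.

Section FiniteSums.

Context {B : Type}.
Implicit Types (l : list B) (F G : B -> R).

Lemma sumR_cons x l F : sumR (x :: l) F = F x + sumR l F.
Proof. reflexivity. Qed.

Lemma sumR_app l1 l2 F : sumR (l1 ++ l2) F = sumR l1 F + sumR l2 F.
Proof. induction l1 as [|x l1 IH]; simpl; [lra|]. unfold sumR in *; simpl; rewrite IH; lra. Qed.

Lemma sumR_ext l F G : (forall x, In x l -> F x = G x) -> sumR l F = sumR l G.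
Proof.
  induction l as [|x l IH]; intros H; [reflexivity|].
  rewrite !sumR_cons, H, IH; [reflexivity| |now left].
  intros y Hy; apply H; now right.
Qed.

Lemma sumR_le l F G : (forall x, In x l -> F x <= G x) -> sumR l F <= sumR l G.
Proof.
  induction l as [|x l IH]; intros H; [simpl; lra|].
  assert (F x <= G x) by (apply H; simpl; auto).
  assert (sumR l F <= sumR l G) by (apply IH; intros; apply H; simpl; auto).
  rewrite !sumR_cons; lra.
Qed.

Lemma sumR_const l c : sumR l (fun _ => c) = INR (length l) * c.
Proof.
  induction l as [|x l IH]; [simpl; lra|].
  rewrite sumR_cons, IH; simpl length; rewrite S_INR; lra.
Qed.

Lemma sumR_nonneg l F : (forall x, In x l -> 0 <= F x) -> 0 <= sumR l F.
Proof.
  intros H. apply Rle_trans with (sumR l (fun _ => 0)).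
  - rewrite sumR_const; lra.
  - apply sumR_le; auto.
Qed.

Lemma sumR_add l F G : sumR l (fun x => F x + G x) = sumR l F + sumR l G.
Proof. induction l as [|x l IH]; simpl; [lra|]. unfold sumR in *; simpl; rewrite IH; lra. Qed.

Lemma sumR_scal_l l c F : sumR l (fun x => c * F x) = c * sumR l F.
Proof. induction l as [|x l IH]; simpl; [lra|]. unfold sumR in *; simpl; rewrite IH; lra. Qed.

Lemma sumR_scal_r l c F : sumR l (fun x => F x * c) = sumR l F * c.
Proof. rewrite Rmult_comm, <- sumR_scal_l. apply sumR_ext; intros; lra. Qed.

Lemma le_sumR_term l F x :
  In x l -> (forall y, In y l -> 0 <= F y) -> F x <= sumR l F.
Proof.
  induction l as [|y l IH]; intros Hx H; [destruct Hx|]. rewrite sumR_cons.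
  assert (0 <= F y) by (apply H; simpl; auto).
  assert (0 <= sumR l F) by (apply sumR_nonneg; intros; apply H; simpl; auto).
  destruct Hx as [<-|Hx]; [lra|].
  assert (F x <= sumR l F) by (apply IH; auto; intros; apply H; simpl; auto). lra.
Qed.

End FiniteSums.

Lemma sumR_swap {B C : Type} (l : list B) (l' : list C) (F : B -> C -> R) :
  sumR l (fun x => sumR l' (F x)) = sumR l' (fun y => sumR l (fun x => F x y)).
Proof.
  induction l as [|x l IH].
  - rewrite (sumR_ext l' _ (fun _ => 0)) by reflexivity. rewrite sumR_const; simpl; lra.
  - rewrite sumR_cons, IH, <- sumR_add. reflexivity.
Qed.

Lemma sumR_map {B C : Type} (l : list C) (g : C -> B) (F : B -> R) :
  sumR (map g l) F = sumR l (fun x => F (g x)).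
Proof.
  induction l as [|x l IH]; [reflexivity|].
  simpl map; rewrite !sumR_cons, IH; reflexivity.
Qed.

Lemma sumR_flat_map {B C : Type} (l : list C) (g : C -> list B) (F : B -> R) :
  sumR (flat_map g l) F = sumR l (fun x => sumR (g x) F).
Proof.
  induction l as [|x l IH]; [reflexivity|].
  simpl flat_map; rewrite sumR_app, IH; reflexivity.
Qed.

Lemma ind_true (P : Prop) : P -> ind P = 1.
Proof. intros H; unfold ind; destruct (excluded_middle_informative P); tauto. Qed.

Lemma ind_false (P : Prop) : ~ P -> ind P = 0.
Proof. intros H; unfold ind; destruct (excluded_middle_informative P); tauto. Qed.

Lemma ind_nonneg (P : Prop) : 0 <= ind P.
Proof. unfold ind; destruct (excluded_middle_informative P); lra. Qed.

Lemma ind_and (P Q : Prop) : ind (P /\ Q) = ind P * ind Q.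
Proof.
  unfold ind.
  destruct (excluded_middle_informative (P /\ Q)), (excluded_middle_informative P),
    (excluded_middle_informative Q); tauto || lra.
Qed.

Lemma ind_mul_le (P Q : Prop) x c :
  0 <= x -> 0 <= c -> (P -> Q /\ x <= c) -> ind P * x <= ind Q * c.
Proof.
  intros Hx Hc H. destruct (excluded_middle_informative P) as [HP|HP].
  - destruct (H HP) as [HQ Hle]. rewrite !ind_true by assumption. lra.
  - rewrite ind_false by exact HP. pose proof (ind_nonneg Q). nra.
Qed.

Lemma ind_le_sumR_ind {B : Type} (l : list B) (P : Prop) (S : B -> Prop) :
  (P -> exists x, In x l /\ S x) -> ind P <= sumR l (fun x => ind (S x)).
Proof.
  intros H. destruct (excluded_middle_informative P) as [HP|HP].
  - destruct (H HP) as [x [Hx HS]]. rewrite ind_true by exact HP.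
    rewrite <- (ind_true (S x)) by exact HS.
    apply (le_sumR_term l (fun x => ind (S x))); auto using ind_nonneg.
  - rewrite ind_false by exact HP. apply sumR_nonneg; auto using ind_nonneg.
Qed.

Lemma sumR_ind_eq_le {B : Type} (l : list B) t c :
  NoDup l -> 0 <= c -> sumR l (fun x => ind (x = t) * c) <= c.
Proof.
  intros Hnd Hc. induction Hnd as [|x l Hx Hnd IH]; [simpl; lra|]. rewrite sumR_cons.
  destruct (excluded_middle_informative (x = t)) as [<-|Hne].
  - rewrite ind_true by reflexivity.
    rewrite (sumR_ext _ _ (fun _ => 0)), sumR_const; [lra|].
    intros y Hy. rewrite ind_false; [lra|]. intros ->; contradiction.
  - rewrite ind_false by exact Hne. lra.
Qed.

Section Words.

Context {A : Type} (enumA : list A).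

Lemma words_length m w : In w (words enumA m) -> length w = m.
Proof.
  revert w; induction m as [|m IH]; simpl; intros w Hw.
  - destruct Hw as [<-|[]]; reflexivity.
  - apply in_flat_map in Hw as [x [Hx Hw]]. apply in_map_iff in Hw as [a [<- _]].
    simpl; f_equal; auto.
Qed.

Lemma sumR_words_S m (F : list A -> R) :
  sumR (words enumA (S m)) F = sumR (words enumA m) (fun w => sumR enumA (fun a => F (a :: w))).
Proof. simpl words. rewrite sumR_flat_map. apply sumR_ext; intros. apply sumR_map. Qed.

Lemma sumR_words_add a b (F : list A -> R) :
  sumR (words enumA (a + b)) F =
  sumR (words enumA a) (fun x => sumR (words enumA b) (fun y => F (x ++ y))).
Proof.
  revert F; induction a as [|a IH]; intros F.
  - change (words enumA 0) with [@nil A]. rewrite sumR_cons. simpl (sumR [] _).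
    rewrite Rplus_0_r. reflexivity.
  - simpl plus. rewrite sumR_words_S, IH, sumR_words_S. apply sumR_ext; intros x _.
    rewrite sumR_swap. reflexivity.
Qed.

Hypothesis Hnd : NoDup enumA.

Lemma sumR_words_ind_eq_le m t c :
  0 <= c -> sumR (words enumA m) (fun w => ind (w = t) * c) <= c.
Proof.
  intros Hc. revert t; induction m as [|m IH]; intros t.
  - simpl words. rewrite sumR_cons. simpl (sumR [] _).
    unfold ind; destruct (excluded_middle_informative _); lra.
  - rewrite sumR_words_S. destruct t as [|b t].
    + rewrite (sumR_ext _ _ (fun _ => 0)), sumR_const; [lra|]. intros w _.
      rewrite (sumR_ext _ _ (fun _ => 0)), sumR_const; [lra|].
      intros a _. rewrite ind_false by discriminate. lra.
    + apply Rle_trans with (sumR (words enumA m) (fun w => ind (w = t) * c)); [|apply IH].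
      apply sumR_le; intros w _. destruct (excluded_middle_informative (w = t)) as [->|Hne].
      * rewrite ind_true by reflexivity.
        rewrite Rmult_1_l, (sumR_ext _ _ (fun a => ind (a = b) * c)).
        { apply sumR_ind_eq_le; assumption. }
        intros a _. unfold ind.
        destruct (excluded_middle_informative (a :: t = b :: t)) as [E|E],
          (excluded_middle_informative (a = b)) as [E'|E']; try reflexivity.
        -- injection E; contradiction.
        -- subst; contradiction.
      * rewrite ind_false by exact Hne.
        rewrite (sumR_ext _ _ (fun _ => 0)), sumR_const; [lra|].
        intros a _. rewrite ind_false; [lra|]. intros E; injection E; contradiction.
Qed.

Lemma sumR_words_app_r_le a b (Phi : list A -> R) (t : list A -> list A) (c : list A -> R) :
  (forall x, 0 <= c x) ->
  (forall x y, length x = a -> length y = b -> Phi (x ++ y) <= ind (y = t x) * c x) ->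
  sumR (words enumA (a + b)) Phi <= sumR (words enumA a) c.
Proof.
  intros Hc H. rewrite sumR_words_add. apply sumR_le; intros x Hx.
  eapply Rle_trans; [|apply (sumR_words_ind_eq_le b (t x)); auto].
  apply sumR_le; intros y Hy. apply H; eapply words_length; eassumption.
Qed.

Lemma sumR_words_app_l_le a b (Phi : list A -> R) (t : list A -> list A) (c : list A -> R) :
  (forall y, 0 <= c y) ->
  (forall x y, length x = a -> length y = b -> Phi (x ++ y) <= ind (x = t y) * c y) ->
  sumR (words enumA (a + b)) Phi <= sumR (words enumA b) c.
Proof.
  intros Hc H. rewrite sumR_words_add, sumR_swap. apply sumR_le; intros y Hy.
  eapply Rle_trans; [|apply (sumR_words_ind_eq_le a (t y)); auto].
  apply sumR_le; intros x Hx. apply H; eapply words_length; eassumption.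
Qed.

End Words.

Section Subwords.

Context {A : Type}.
Implicit Types (a b u : list A).

Lemma firstn_app_le a b m : (m <= length a)%nat -> firstn m (a ++ b) = firstn m a.
Proof.
  intros H. rewrite firstn_app. replace (m - length a)%nat with 0%nat by lia.
  apply app_nil_r.
Qed.

Lemma subw_length u i m : (i + m <= length u)%nat -> length (subw u i m) = m.
Proof. intros H. unfold subw. rewrite length_firstn, length_skipn. lia. Qed.

Lemma subw_app_l a b i m : (i + m <= length a)%nat -> subw (a ++ b) i m = subw a i m.
Proof.
  intros H. unfold subw. rewrite skipn_app. replace (i - length a)%nat with 0%nat by lia.
  apply firstn_app_le. rewrite length_skipn. lia.
Qed.

Lemma subw_app_r a b i m : (length a <= i)%nat -> subw (a ++ b) i m = subw b (i - length a) m.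
Proof. intros H. unfold subw. rewrite skipn_app, skipn_all2 by lia. reflexivity. Qed.

Lemma subw_0_length u : subw u 0 (length u) = u.
Proof. apply firstn_all. Qed.

End Subwords.

Section Measure.

Context {A : Type} (enumA : list A) (X : (Z -> A) -> Prop) (mu : list A -> R).
Hypothesis Hmu : InvProbOn enumA X mu.

Lemma mu_nonneg w : 0 <= mu w.
Proof. apply Hmu. Qed.

Lemma sumR_words_mu_app_r m w : sumR (words enumA m) (fun y => mu (w ++ y)) = mu w.
Proof.
  destruct Hmu as [_ [_ [Hr _]]]. revert w; induction m as [|m IH]; intros w.
  - change (words enumA 0) with [@nil A]. rewrite sumR_cons, app_nil_r. simpl; lra.
  - rewrite sumR_words_S, sumR_swap, (Hr w). apply sumR_ext; intros a _.
    rewrite <- (IH (w ++ [a])). apply sumR_ext; intros y _. rewrite <- app_assoc. reflexivity.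
Qed.

Lemma sumR_words_mu_app_l m w : sumR (words enumA m) (fun x => mu (x ++ w)) = mu w.
Proof.
  destruct Hmu as [_ [_ [_ [Hl _]]]]. induction m as [|m IH].
  - change (words enumA 0) with [@nil A]. rewrite sumR_cons. simpl; lra.
  - rewrite sumR_words_S, <- IH. apply sumR_ext; intros x _. rewrite (Hl (x ++ w)). reflexivity.
Qed.

Lemma sumR_words_mu m : sumR (words enumA m) mu = 1.
Proof.
  destruct Hmu as [Hnil _]. rewrite <- Hnil, <- (sumR_words_mu_app_l m []).
  apply sumR_ext; intros x _. rewrite app_nil_r. reflexivity.
Qed.

Lemma mu_app_le K : 0 <= K -> QuasiBernoulli X mu K -> forall u v, mu (u ++ v) <= K * mu u * mu v.
Proof.
  intros HK HQ u v. destruct (excluded_middle_informative (inLang X (u ++ v))) as [Hl|Hl].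
  - apply (HQ u v Hl).
  - destruct Hmu as [_ [_ [_ [_ Hz]]]]. rewrite Hz by exact Hl.
    pose proof (mu_nonneg u); pose proof (mu_nonneg v).
    apply Rmult_le_pos; [apply Rmult_le_pos|]; assumption.
Qed.

Lemma mu_le_pow gamma n0 :
  0 <= gamma -> (forall u, inLang X u -> (n0 <= length u)%nat -> mu u <= gamma ^ length u) ->
  forall u, (n0 <= length u)%nat -> mu u <= gamma ^ length u.
Proof.
  intros Hg H u Hu. destruct (excluded_middle_informative (inLang X u)) as [Hl|Hl]; auto.
  destruct Hmu as [_ [_ [_ [_ Hz]]]]. rewrite Hz by exact Hl. apply pow_le, Hg.
Qed.

Lemma mu2_le_sumR {I : Type} k (S : list A -> list A -> Prop) (l : list I) T :
  (forall u v, length u = k -> length v = k -> ind (S u v) <= sumR l (fun x => ind (T x u v))) ->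
  mu2 enumA mu k S <= sumR l (fun x => mu2 enumA mu k (T x)).
Proof.
  intros H. unfold mu2.
  apply Rle_trans with (sumR (words enumA k) (fun u => sumR (words enumA k) (fun v =>
    sumR l (fun x => ind (T x u v) * mu u * mu v)))).
  - apply sumR_le; intros u Hu; apply sumR_le; intros v Hv.
    rewrite sumR_scal_r, sumR_scal_r. pose proof (mu_nonneg u); pose proof (mu_nonneg v).
    apply Rmult_le_compat_r, Rmult_le_compat_r; auto.
    apply H; eapply words_length; eassumption.
  - right. rewrite (sumR_swap l (words enumA k)). apply sumR_ext; intros u _.
    rewrite (sumR_swap l (words enumA k)). reflexivity.
Qed.

Hypothesis Hnd : NoDup enumA.

Lemma sumR_words_subw_mu_le m p n s :
  (p + n <= m)%nat -> length s = n ->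
  sumR (words enumA m) (fun w => ind (subw w p n = s) * mu w) <= mu s.
Proof.
  intros Hm Hs. replace m with ((p + n) + (m - p - n))%nat by lia.
  rewrite sumR_words_add.
  rewrite (sumR_ext _ _ (fun x => ind (subw x p n = s) * mu x)).
  2:{ intros x Hx. apply words_length in Hx.
      rewrite <- (sumR_words_mu_app_r (m - p - n) x), <- sumR_scal_l.
      apply sumR_ext; intros y _. rewrite subw_app_l by lia. reflexivity. }
  rewrite <- (sumR_words_mu_app_l p s).
  apply sumR_words_app_r_le with (t := fun _ => s); [assumption| |].
  - intros x; apply mu_nonneg.
  - intros x y Hx Hy. rewrite subw_app_r, <- Hx, Nat.sub_diag, <- Hy, subw_0_length by lia.
    destruct (excluded_middle_informative (y = s)) as [->|Hne]; [lra|].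
    rewrite ind_false by exact Hne. rewrite Rmult_0_l. apply Rmult_le_pos; [lra|apply mu_nonneg].
Qed.

End Measure.

Lemma mu2_eq0 {A : Type} (enumA : list A) (mu : list A -> R) k (S : list A -> list A -> Prop) :
  (forall u v, ~ S u v) -> mu2 enumA mu k S = 0.
Proof.
  intros H. unfold mu2. rewrite (sumR_ext _ _ (fun _ => 0)), sumR_const; [lra|].
  intros u _. rewrite (sumR_ext _ _ (fun _ => 0)), sumR_const; [lra|].
  intros v _. rewrite ind_false by apply H. lra.
Qed.

Lemma En_mu_le {A : Type} (X : (Z -> A) -> Prop) mu h delta n w :
  (1 <= n)%nat -> En X mu h delta n w -> mu w <= exp (- INR n * (h - delta)).
Proof.
  intros Hn [_ [_ Hw]]. apply Rabs_def2 in Hw as [_ Hw].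
  assert (Hpos : 0 < INR n) by (apply lt_0_INR; lia).
  destruct (Rle_lt_dec (mu w) 0) as [Hle|Hlt]; [pose proof (exp_pos (- INR n * (h - delta))); lra|].
  rewrite <- (exp_ln (mu w)) by exact Hlt. apply Rlt_le, exp_increasing.
  replace (ln (mu w)) with (- INR n * (- (1 / INR n) * ln (mu w))) by (field; lra).
  apply Rmult_lt_compat_l with (r := INR n) in Hw; [|exact Hpos]. lra.
Qed.

Lemma Gnk_le_length {A : Type} (X : (Z -> A) -> Prop) mu h delta n k u :
  Gnk X mu h delta n k u -> (n <= k)%nat.
Proof. intros [_ [Hu [_ [_ [Hf _]]]]]. rewrite length_firstn in Hf. lia. Qed.

Section GoodWords.

Context {A : Type} (enumA : list A) (X : (Z -> A) -> Prop) (mu : list A -> R).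
Hypothesis Hmu : InvProbOn enumA X mu.
Hypothesis Hnd : NoDup enumA.
Context (K : R) (HK : 0 <= K) (HQB : QuasiBernoulli X mu K).
Context (h delta : R) (n k : nat) (Hn : (1 <= n)%nat).

Let G := Gnk X mu h delta n k.
Let E := exp (- INR n * (h - delta)).

Context (gamma : R) (n0 : nat) (Hgamma : 0 <= gamma) (Hn0 : (n0 <= n)%nat)
  (Hmu_gamma : forall u, inLang X u -> (n0 <= length u)%nat -> mu u <= gamma ^ length u).

Lemma Gnk_app_r x y :
  (2 * n <= k)%nat -> length x = (k - n)%nat -> length y = n ->
  G (x ++ y) -> y = firstn n x /\ mu (x ++ y) <= K * E * mu x.
Proof.
  intros Hk Hx Hy [_ [_ [Heq HEn]]].
  rewrite firstn_app_le in Heq, HEn by lia.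
  rewrite subw_app_r, Hx in Heq by lia.
  replace (k - n + 1 - 1 - (k - n))%nat with 0%nat in Heq by lia.
  replace (subw y 0 n) with y in Heq by (rewrite <- Hy; symmetry; apply subw_0_length).
  split; [congruence|].
  pose proof (En_mu_le X mu h delta n _ Hn HEn) as Hy_le. rewrite Heq in Hy_le. fold E in Hy_le.
  eapply Rle_trans; [apply (mu_app_le _ _ _ Hmu K HK HQB)|].
  replace (K * E * mu x) with (K * mu x * E) by ring.
  apply Rmult_le_compat_l; [apply Rmult_le_pos; [exact HK|apply (mu_nonneg _ _ _ Hmu)]|exact Hy_le].
Qed.

Lemma Gnk_app_l x y :
  (2 * n <= k)%nat -> length x = n -> length y = (k - n)%nat ->
  G (x ++ y) -> x = subw y (k - n - n) n /\ mu (x ++ y) <= K * E * mu y.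
Proof.
  intros Hk Hx Hy [_ [_ [Heq HEn]]].
  assert (Hfx : firstn n (x ++ y) = x)
    by (rewrite firstn_app_le by lia; rewrite <- Hx; apply firstn_all).
  rewrite Hfx in Heq, HEn. rewrite subw_app_r, Hx in Heq by lia.
  replace (k - n + 1 - 1 - n)%nat with (k - n - n)%nat in Heq by lia. split; [exact Heq|].
  pose proof (En_mu_le X mu h delta n _ Hn HEn) as Hx_le. fold E in Hx_le.
  eapply Rle_trans; [apply (mu_app_le _ _ _ Hmu K HK HQB)|].
  apply Rmult_le_compat_r; [apply (mu_nonneg _ _ _ Hmu)|].
  apply Rmult_le_compat_l; [exact HK|exact Hx_le].
Qed.

Lemma sumR_Gnk_mu_le : (2 * n <= k)%nat ->
  sumR (words enumA k) (fun u => ind (G u) * mu u) <= K * E.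
Proof.
  intros Hk. replace k with ((k - n) + n)%nat at 1 by lia.
  rewrite <- Rmult_1_r, <- (sumR_words_mu _ _ _ Hmu (k - n)), <- sumR_scal_l.
  assert (HE : 0 < E) by apply exp_pos.
  apply sumR_words_app_r_le with (t := firstn n); [assumption| |].
  - intros x. pose proof (mu_nonneg _ _ _ Hmu x). apply Rmult_le_pos; [nra|lra].
  - intros x y Hx Hy. apply ind_mul_le; [apply (mu_nonneg _ _ _ Hmu)| |].
    + pose proof (mu_nonneg _ _ _ Hmu x). apply Rmult_le_pos; [nra|lra].
    + apply Gnk_app_r; assumption || lia.
Qed.

Lemma sumR_Gnk_subw_mu_le j s :
  (3 * n <= k)%nat -> (j + n <= k)%nat -> length s = n ->
  sumR (words enumA k) (fun v => ind (G v /\ subw v j n = s) * mu v) <= K * E * mu s.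
Proof.
  intros Hk Hj Hs. assert (HE : 0 < E) by apply exp_pos.
  assert (HKE : 0 <= K * E) by nra.
  assert (Hc : forall y j', 0 <= K * E * (ind (subw y j' n = s) * mu y)).
  { intros y j'. pose proof (mu_nonneg _ _ _ Hmu y). pose proof (ind_nonneg (subw y j' n = s)).
    apply Rmult_le_pos; [exact HKE|nra]. }
  destruct (le_lt_dec (j + n) (k - n)) as [Hjl|Hjr].
  - replace k with ((k - n) + n)%nat at 1 by lia.
    eapply Rle_trans with (sumR (words enumA (k - n))
      (fun y => K * E * (ind (subw y j n = s) * mu y))).
    + apply sumR_words_app_r_le with (t := firstn n); [assumption|intros; apply Hc|].
      intros x y Hx Hy. apply ind_mul_le; [apply (mu_nonneg _ _ _ Hmu)|apply Hc|].
      intros [HG Hsub]. rewrite subw_app_l in Hsub by lia.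
      rewrite (ind_true _ Hsub), Rmult_1_l. apply Gnk_app_r; assumption || lia.
    + rewrite sumR_scal_l. apply Rmult_le_compat_l; [exact HKE|].
      apply (sumR_words_subw_mu_le _ _ _ Hmu Hnd); assumption || lia.
  - replace k with (n + (k - n))%nat at 1 by lia.
    eapply Rle_trans with (sumR (words enumA (k - n))
      (fun y => K * E * (ind (subw y (j - n) n = s) * mu y))).
    + apply sumR_words_app_l_le with (t := fun y => subw y (k - n - n) n);
        [assumption|intros; apply Hc|].
      intros x y Hx Hy. apply ind_mul_le; [apply (mu_nonneg _ _ _ Hmu)|apply Hc|].
      intros [HG Hsub]. rewrite subw_app_r, Hx in Hsub by lia.
      rewrite (ind_true _ Hsub), Rmult_1_l. apply Gnk_app_l; assumption || lia.
    + rewrite sumR_scal_l. apply Rmult_le_compat_l; [exact HKE|].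
      apply (sumR_words_subw_mu_le _ _ _ Hmu Hnd); assumption || lia.
Qed.

Lemma mu2_Gnk_common_subw_le i j :
  (3 * n <= k)%nat -> (i + n <= k)%nat -> (j + n <= k)%nat ->
  mu2 enumA mu k (fun u v => G u /\ G v /\ subw v j n = subw u i n) <= K * E * (K * E * gamma ^ n).
Proof.
  intros Hk Hi Hj. unfold mu2.
  assert (HE : 0 < E) by apply exp_pos.
  assert (Hc : 0 <= K * E * gamma ^ n) by (apply Rmult_le_pos; [nra|apply pow_le, Hgamma]).
  apply Rle_trans with (sumR (words enumA k) (fun u => ind (G u) * mu u * (K * E * gamma ^ n))).
  - apply sumR_le; intros u Hu. apply words_length in Hu.
    rewrite (sumR_ext _ _
      (fun v => ind (G u) * mu u * (ind (G v /\ subw v j n = subw u i n) * mu v)))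
      by (intros v _; rewrite ind_and; ring).
    rewrite sumR_scal_l. apply Rmult_le_compat_l.
    { pose proof (ind_nonneg (G u)); pose proof (mu_nonneg _ _ _ Hmu u); nra. }
    eapply Rle_trans; [apply sumR_Gnk_subw_mu_le;
                       [assumption..|apply subw_length; lia]|].
    fold E. apply Rmult_le_compat_l; [nra|].
    rewrite <- (subw_length u i n) at 2 by lia.
    apply (mu_le_pow _ _ _ Hmu gamma n0 Hgamma Hmu_gamma). rewrite subw_length; lia.
  - rewrite sumR_scal_r. apply Rmult_le_compat_r; [exact Hc|].
    apply sumR_Gnk_mu_le; lia.
Qed.

Lemma mu2_Qnk_le : (3 * n <= k)%nat ->
  mu2 enumA mu k (Qnk X mu h delta n k) <=
  INR (S (k - n)) ^ 2 * (K * E * (K * E * gamma ^ n)).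
Proof.
  intros Hk. set (idx := seq 0 (S (k - n))).
  eapply Rle_trans.
  - apply (mu2_le_sumR _ _ _ Hmu) with (l := list_prod idx idx)
      (T := fun ij u v => G u /\ G v /\ subw v (snd ij) n = subw u (fst ij) n).
    intros u v Hu Hv. apply ind_le_sumR_ind.
    intros [Gu [Gv [i [j [Hi [Hj Hsub]]]]]]. exists (i, j). split.
    + apply in_prod; apply in_seq; lia.
    + simpl. auto.
  - apply Rle_trans with (sumR (list_prod idx idx) (fun _ => K * E * (K * E * gamma ^ n))).
    + apply sumR_le; intros [i j] Hij. apply in_prod_iff in Hij as [Hi Hj].
      apply in_seq in Hi, Hj. apply mu2_Gnk_common_subw_le; simpl; lia.
    + rewrite sumR_const, length_prod. unfold idx. rewrite length_seq, mult_INR. right; ring.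
Qed.

End GoodWords.

Lemma gamma0_nonneg {A : Type} (X : (Z -> A) -> Prop) mu g : gamma0_def X mu g -> 0 <= g.
Proof. intros [_ Hglb]. apply Hglb. intros s [Hs _]. lra. Qed.

(* Since [INR n / INR 0 = 0], the hypothesis cannot exclude [k n = 0]. *)
Lemma eventually_mul_le_of_ratio_cv (k : nat -> nat) (c : nat) :
  Un_cv (fun n => INR n / INR (k n)) 0 ->
  exists N, forall n, (N <= n)%nat -> k n = 0%nat \/ (c * n <= k n)%nat.
Proof.
  intros Hk. assert (Hc : 0 < INR c + 1) by (pose proof (pos_INR c); lra).
  destruct (Hk (/ (INR c + 1))) as [N HN]; [apply Rinv_0_lt_compat, Hc|].
  exists N. intros n Hn. destruct (Nat.eq_dec (k n) 0) as [Hk0|Hk0]; [now left|right].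
  specialize (HN n Hn). unfold R_dist in HN. rewrite Rminus_0_r in HN.
  assert (Hkpos : 0 < INR (k n)) by (apply lt_0_INR; lia).
  assert (Hq : 0 <= INR n / INR (k n)) by (apply Rle_mult_inv_pos; [apply pos_INR|exact Hkpos]).
  rewrite Rabs_right in HN by lra.
  apply INR_le. rewrite mult_INR.
  apply Rmult_lt_compat_l with (r := (INR c + 1) * INR (k n)) in HN; [|nra].
  replace ((INR c + 1) * INR (k n) * (INR n / INR (k n))) with ((INR c + 1) * INR n) in HN
    by (field; lra).
  replace ((INR c + 1) * INR (k n) * / (INR c + 1)) with (INR (k n)) in HN by (field; lra).
  pose proof (pos_INR n). nra.
Qed.

Lemma eventually_le_sq_of_log_cv (k : nat -> nat) :
  Un_cv (fun n => INR (k n) * ln (INR n) / INR n ^ 2) 0 ->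
  exists N, forall n, (N <= n)%nat -> INR (k n) <= INR n ^ 2.
Proof.
  intros Hk. destruct (Hk 1 Rlt_0_1) as [N HN]. exists (max 4 N). intros n Hn.
  specialize (HN n ltac:(lia)). unfold R_dist in HN. rewrite Rminus_0_r in HN.
  assert (Hn4 : 4 <= INR n) by (replace 4 with (INR 4) by (simpl; lra); apply le_INR; lia).
  assert (Hln : 1 <= ln (INR n)).
  { rewrite <- (ln_exp 1). left. apply ln_increasing; [apply exp_pos|]. pose proof exp_le_3. lra. }
  assert (Hsq : 0 < INR n ^ 2) by (apply pow_lt; lra).
  pose proof (pos_INR (k n)).
  assert (Hq : 0 <= INR (k n) * ln (INR n) / INR n ^ 2)
    by (apply Rle_mult_inv_pos; [nra|exact Hsq]).
  rewrite Rabs_right in HN by lra.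
  apply Rmult_lt_compat_l with (r := INR n ^ 2) in HN; [|exact Hsq].
  replace (INR n ^ 2 * (INR (k n) * ln (INR n) / INR n ^ 2)) with (INR (k n) * ln (INR n)) in HN
    by (field; lra).
  nra.
Qed.

Theorem mainTheorem9
  (A : Type) (enumA : list A) (HA : FiniteAlphabet enumA)
  (F : list (list A))
  (Hnontriv : nontrivial (SFT F)) (Hmix : top_mixing (SFT F))
  (f : (Z -> A) -> R) (Hf : Holder (SFT F) f)
  (P : R) (HP : IsPressure enumA (SFT F) f P)
  (mu : list A -> R) (Hmu : InvProbOn enumA (SFT F) mu)
  (h : R) (Hh : IsEntropy enumA mu h)
  (K : R) (HK : 1 < K)
  (Hi : GibbsProp (SFT F) f P mu K)
  (Hii : QuasiBernoulli (SFT F) mu K)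
  (gamma0 : R) (Hg0 : gamma0_def (SFT F) mu gamma0)
  (alpha gamma : R) (Halpha : gamma0 < alpha <= 1)
  (Hgamma : gamma0 < gamma < alpha)
  (n0 : nat)
  (Hn0 : forall u, inLang (SFT F) u -> (n0 <= length u)%nat ->
                   mu u <= gamma ^ length u)
  (delta : R) (Hdelta : 0 < delta < / 4 * ln (alpha / gamma))
  (k : nat -> nat)
  (Hk1 : Un_cv (fun n => INR n / INR (k n)) 0)
  (Hk2 : Un_cv (fun n => INR (k n) * ln (INR n) / INR n ^ 2) 0) :
  exists (p3 : list R) (N : nat), forall n : nat, (N <= n)%nat ->
    mu2 enumA mu (k n) (Qnk (SFT F) mu h delta n (k n))
      <= peval p3 (INR n) * exp (- 2 * INR n * (h - delta)) * gamma ^ n.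
Proof.
  destruct HA as [Hnd _].
  assert (Hg : 0 <= gamma) by (pose proof (gamma0_nonneg _ _ _ Hg0); lra).
  destruct (eventually_mul_le_of_ratio_cv k 3 Hk1) as [N1 HN1].
  destruct (eventually_le_sq_of_log_cv k Hk2) as [N2 HN2].
  exists [0; 0; 0; 0; K * K], (max 1 (max n0 (max N1 N2))). intros n Hn.
  set (E := exp (- INR n * (h - delta))).
  assert (HE : 0 < E) by apply exp_pos.
  assert (HKE : 0 <= K * E) by nra.
  assert (Hc : 0 <= K * E * (K * E * gamma ^ n))
    by (apply Rmult_le_pos; [exact HKE|apply Rmult_le_pos; [exact HKE|apply pow_le, Hg]]).
  replace (peval [0; 0; 0; 0; K * K] (INR n) * exp (- 2 * INR n * (h - delta)) * gamma ^ n)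
    with (INR n ^ 4 * (K * E * (K * E * gamma ^ n)))
    by (unfold E; replace (- 2 * INR n * (h - delta))
          with (- INR n * (h - delta) + - INR n * (h - delta)) by ring;
        rewrite exp_plus; simpl; ring).
  destruct (HN1 n ltac:(lia)) as [Hk0|Hk].
  - rewrite mu2_eq0; [pose proof (pow_le (INR n) 4 (pos_INR n)); nra|].
    intros u v [Gu _]. apply Gnk_le_length in Gu. lia.
  - eapply Rle_trans;
      [apply (mu2_Qnk_le enumA _ mu Hmu Hnd K ltac:(lra) Hii h delta n (k n) ltac:(lia)
                gamma n0 Hg ltac:(lia) Hn0 Hk)|].
    apply Rmult_le_compat_r; [exact Hc|].
    assert (Hsk : INR (S (k n - n)) <= INR n ^ 2)
      by (eapply Rle_trans; [apply le_INR|apply HN2]; lia).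
    replace (INR n ^ 4) with ((INR n ^ 2) ^ 2) by ring.
    apply pow_incr. split; [apply pos_INR|exact Hsk].
Qed.
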